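(* Assume $PS(h,P_h)>PS(\ell,P_h)$ and $PS(\ell,P_\ell)>PS(h,P_\ell)$. Fix an integer $d\ge 2$. Consider a sequence of peer prediction instances indexed by $n$, with the following properties: - they all share the same values of $P(h)$, $P(h\mid h)$, $P(h\mid\ell)$ and the same $PS$; - for each $n$, the admissible family $\mathcal D_n$ contains some set $D_n\subseteq[n]$ with $|D_n|=d$; - for each signal profile $s_D\in\{\ell,h\}^d$ of $D_n$ containing at least one $h$ and at least one $\ell$, the conditional probability $p(s_D)=Q_n(\Psi_j=h\mid \Psi_{D_n}=s_D)$ for $j\notin D_n$ does not depend on $n$. Then for all sufficiently large $n$, the truthful profile $\Sigma^*$ is not an interim $\mathcal D_n$ equilibrium.
   Context: Peer prediction setting. There are $n$ agents. Signals $\Psi_i\in\{\ell,h\}$ are drawn from a symmetric common prior $Q_n$ on $\{\ell,h\}^n$. $P(s\mid s')$ is the probability that another agent has signal $s$ given that one's own signal is $s'$, and $P_{s'}=P(\cdot\mid s')$. Standing assumptions: $P(\ell),P(h)>0$, $P(h\mid h)>P(h\mid\ell)$, $P(h\mid\ell)>0$ and $P(\ell\mid h)>0$. $PS$ is a strictly proper scoring rule. Each agent reports $r_i\in\{\ell,h\}$ and receives $v_i=\frac1{n-1}\sum_{j\ne i}PS(r_j,P_{r_i})$. Strategies map signals to distributions over reports, and $\Sigma^*$ is the profile in which every agent reports truthfully. Given a family $\mathcal D$ of admissible subsets of $[n]$, a profile $\Sigma$ is an interim $\mathcal D$ equilibrium if there do not exist $D\in\mathcal D$, a signal profile $s_D=(s_i)_{i\in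 D}$, and a profile $\Sigma'$ such that: (1) $\sigma'_i=\sigma_i$ for all $i\notin D$; and (2) for all $i\in D$, $u_i(\Sigma'\mid s_D)>u_i(\Sigma\mid s_D)$. Here $u_i(\cdot\mid s_D)$ is $i$'s expected utility conditioned on the signals of all members of $D$ being $s_D$. *)

From HB Require Import structures.
From mathcomp Require Import all_boot all_order all_algebra all_fingroup.
Set Implicit Arguments. Unset Strict Implicit. Unset Printing Implicit Defensive.
Import Order.TTheory GRing.Theory Num.Theory.
Local Open Scope ring_scope.

(* Signals / reports: true = h, false = l.  A signal (or report) profile. *)
Definition prof (n : nat) := {ffun 'I_n -> bool}.

(* A distribution over {l,h} is represented by its probability of h. *)

Definition pr (R : realFieldType) n (Q : prof n -> R) (A : pred (prof n)) : R :=
  \sum_(psi | A psi) Q psi.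

(* Conditional probability Q(A | B) (ratio; x / 0 = 0 by MathComp convention). *)
Definition cprob (R : realFieldType) n (Q : prof n -> R) (A B : pred (prof n)) : R :=
  pr Q (predI A B) / pr Q B.

Definition is_sym_prior (R : realFieldType) n (Q : prof n -> R) : Prop :=
  [/\ forall psi, 0 <= Q psi,
      \sum_psi Q psi = 1 &
      forall (pi : {perm 'I_n}) (psi : prof n), Q [ffun k => psi (pi k)] = Q psi].

Definition strictly_proper (R : realFieldType) (PS : bool -> R -> R) : Prop :=
  forall p q : R, 0 <= p <= 1 -> 0 <= q <= 1 -> p != q ->
    p * PS true q + (1 - p) * PS false q < p * PS true p + (1 - p) * PS false p.

(* Payment v_i(r) = 1/(n-1) sum_{j <> i} PS(r_j, P_{r_i}), with P_h = phh
   (= P(h|h)) and P_l = phl (= P(h|l)). *)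
Definition payment (R : realFieldType) n (PS : bool -> R -> R) (phh phl : R)
    (i : 'I_n) (r : prof n) : R :=
  (n.-1)%:R^-1 * \sum_(j | j != i) PS (r j) (if r i then phh else phl).

(* Strategy profile: S i b = probability that agent i reports h given signal b. *)
Definition strat (R : realFieldType) n := 'I_n -> bool -> R.

Definition valid_strat (R : realFieldType) n (S : strat R n) : Prop :=
  forall i b, 0 <= S i b <= 1.

Definition truthful (R : realFieldType) n : strat R n :=
  fun _ b => if b then 1 else 0.

Definition report_prob (R : realFieldType) n (S : strat R n) (psi r : prof n) : R :=
  \prod_k (if r k then S k (psi k) else 1 - S k (psi k)).

Definition agree n (D : {set 'I_n}) (s : prof n) : pred (prof n) :=
  fun psi => [forall k in D, psi k == s k].

Definition util (R : realFieldType) n (Q : prof n -> R) (PS : bool -> R -> R)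
    (phh phl : R) (S : strat R n) (i : 'I_n) (D : {set 'I_n}) (s : prof n) : R :=
  (\sum_(psi | agree D s psi)
      Q psi * \sum_r report_prob S psi r * payment PS phh phl i r)
  / pr Q (agree D s).

Definition interim_eq (R : realFieldType) n (Q : prof n -> R) (PS : bool -> R -> R)
    (phh phl : R) (Dfam : {set {set 'I_n}}) (S : strat R n) : Prop :=
  ~ exists (D : {set 'I_n}) (s : prof n) (S' : strat R n),
      [/\ D \in Dfam, valid_strat S',
          (forall i, i \notin D -> forall b, S' i b = S i b) &
          (forall i, i \in D -> util Q PS phh phl S i D s < util Q PS phh phl S' i D s)].

(* Let the members of D, whose signals s_D are mixed, all report the same value c
   while everybody else stays truthful.  A member's payment consists of its scores
   against the other members of D and its expected scores against the n - d
   outsiders, who report h with probability p(s_D).  A member whose signal is c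
   only changes the first part, and strictly gains because some member disagrees
   with c.  For a member whose signal is not c the gain g(c) does not depend on
   the member, and g(h) + g(l) is a sum over D of terms
   PS(h,P_h) + PS(l,P_l) - PS(s_j,P_h) - PS(s_j,P_l) > 0.  Choosing c with
   g(c) > 0 makes the whole coalition strictly better off, for every
   n >= max(N0, d). *)

From HB Require Import structures.
From mathcomp Require Import all_boot all_order all_algebra all_fingroup.
From mathcomp Require Import ring lra.
Import Order.TTheory GRing.Theory Num.Theory.
Local Open Scope ring_scope.

Set Implicit Arguments. Unset Strict Implicit. Unset Printing Implicit Defensive.

Section CoalitionScore.

Variables (R : realFieldType) (T : finType) (PS : bool -> R -> R) (P W : bool -> R).
Hypothesis PS_agree : forall b, PS (~~ b) (P b) < PS b (P b).
Variable D : {set T}.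

Definition coalition_score (r : T -> bool) (i : T) : R :=
  \sum_(j in D | j != i) PS (r j) (P (r i)) + W (r i).

Definition unanimity_gain (s : T -> bool) (c : bool) : R :=
  \sum_(j in D) (PS c (P c) - PS (s j) (P (~~ c)))
  + PS (~~ c) (P (~~ c)) - PS c (P c) + W c - W (~~ c).

Lemma PS_le_agree (b c : bool) : PS b (P c) <= PS c (P c).
Proof.
case: (eqVneq b c) => [-> //|]; case: b c => -[] //= _.
- exact: ltW (PS_agree false).
- exact: ltW (PS_agree true).
Qed.

Lemma coalition_score_lt_unanimous_agree (s : T -> bool) (c : bool) (i j : T) :
  j \in D -> s i = c -> s j != c ->
  coalition_score s i < coalition_score (fun=> c) i.
Proof.
move=> jD sic sjc; rewrite /coalition_score sic ltrD2r.
have ji : j != i by apply: contraNneq sjc => ->; rewrite sic.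
rewrite (bigD1 j) /= ?jD // [X in _ < X](bigD1 j) /= ?jD //.
apply: ltr_leD; last by apply: ler_sum => k _; apply: PS_le_agree.
by move: sjc; clear sic; case: (s j); case: c => //= _;
  [exact: (PS_agree false) | exact: (PS_agree true)].
Qed.

Lemma coalition_score_unanimous_disagree (s : T -> bool) (c : bool) (i : T) :
  i \in D -> s i = ~~ c ->
  coalition_score (fun=> c) i - coalition_score s i = unanimity_gain s c.
Proof.
move=> iD sic; rewrite /unanimity_gain (bigD1 i) //= sic sumrB /coalition_score sic.
lra.
Qed.

Lemma unanimity_gain_sum_gt0 (s : T -> bool) (i0 : T) :
  i0 \in D -> 0 < unanimity_gain s true + unanimity_gain s false.
Proof.
move=> i0D; rewrite /unanimity_gain.
have term_gt0 j : 0 < PS true (P true) + PS false (P false)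
                      - PS (s j) (P false) - PS (s j) (P true).
  have := PS_agree true; have := PS_agree false.
  by case: (s j) => /= ? ?; lra.
have : 0 < \sum_(j in D) (PS true (P true) + PS false (P false)
                           - PS (s j) (P false) - PS (s j) (P true)).
  by rewrite (bigD1 i0) //= ltr_pwDl // sumr_ge0 // => j _; apply: ltW.
rewrite !sumrB !big_split /=; lra.
Qed.

Lemma unanimous_deviation_profitable (s : T -> bool) (i0 i1 : T) :
  i0 \in D -> i1 \in D -> s i0 -> ~~ s i1 ->
  exists c, forall i, i \in D -> coalition_score s i < coalition_score (fun=> c) i.
Proof.
move=> i0D i1D si0 si1.
have [c gain_c] : exists c, 0 < unanimity_gain s c.
  have := unanimity_gain_sum_gt0 s i0D.
  case: (ltrP 0 (unanimity_gain s true)) => [|le0]; first by exists true.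
  by exists false; lra.
exists c => i iD; case: (eqVneq (s i) c) => [sic | /negPf sic].
  case: c sic {gain_c} => sic.
    by apply: (coalition_score_lt_unanimous_agree (j := i1)); rewrite ?eqb_id.
  by apply: (coalition_score_lt_unanimous_agree (j := i0)); rewrite ?eqbF_neg ?negbK.
have {}sic : s i = ~~ c by move: sic; case: (s i); case: (c).
by rewrite -subr_gt0 coalition_score_unanimous_disagree.
Qed.

End CoalitionScore.

Section Prior.

Variables (R : realFieldType) (n : nat) (Q : prof n -> R).
Hypothesis Q_ge0 : forall psi, 0 <= Q psi.

Lemma pr_predI_cprob (A B : pred (prof n)) (c : R) :
  pr Q B != 0 -> cprob Q A B = c -> pr Q (predI A B) = c * pr Q B.
Proof. by move=> B_neq0 <-; rewrite /cprob divfK. Qed.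

Lemma pr_predI_predC (A B : pred (prof n)) :
  pr Q B = pr Q (predI A B) + pr Q (predI (predC A) B).
Proof.
by rewrite /pr (bigID A) /=; congr (_ + _); apply: eq_bigl => psi; rewrite /= andbC.
Qed.

Lemma pr_ge_mass (A : pred (prof n)) (psi : prof n) : A psi -> Q psi <= pr Q A.
Proof. by move=> Apsi; rewrite /pr (bigD1 psi) //= lerDl sumr_ge0. Qed.

Lemma pr_gt0_witness (A : pred (prof n)) : 0 < pr Q A -> exists2 psi, A psi & 0 < Q psi.
Proof.
move=> prA; case: (pickP (fun psi => A psi && (0 < Q psi))) => [psi /andP[]|none].
  by exists psi.
move: prA; rewrite /pr big1 ?ltxx // => psi Apsi.
have := none psi; rewrite Apsi /= => /negbT; rewrite -leNgt => Q_le0.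
by apply/eqP; rewrite eq_le Q_le0 Q_ge0.
Qed.

Lemma sum_mass_signal (B : pred (prof n)) (j : 'I_n) (F : bool -> R) :
  \sum_(psi | B psi) Q psi * F (psi j) =
  pr Q (predI (fun psi : prof n => psi j) B) * F true
  + pr Q (predI (predC (fun psi : prof n => psi j)) B) * F false.
Proof.
rewrite /pr !mulr_suml (bigID (fun psi : prof n => psi j)) /=.
congr (_ + _).
  by apply: eq_big => [psi | psi /andP[_ ->]]; rewrite // /= andbC.
by apply: eq_big => [psi | psi /andP[_ /negPf ->]]; rewrite // /= andbC.
Qed.

Lemma exists_mixed_profile (i j : 'I_n) (ph phh : R) :
  pr Q (fun psi : prof n => psi i) = ph ->
  cprob Q (fun psi : prof n => psi j) (fun psi : prof n => psi i) = phh ->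
  0 < ph -> 0 < 1 - phh ->
  exists2 psi : prof n, psi i && ~~ psi j & 0 < Q psi.
Proof.
move=> pr_i cprob_ji ph_gt0 phh_lt1.
have := pr_predI_predC (fun psi : prof n => psi j) (fun psi : prof n => psi i).
rewrite (pr_predI_cprob _ cprob_ji) pr_i ?gt_eqF // => split_i.
have : 0 < pr Q (predI (predC (fun psi : prof n => psi j)) (fun psi : prof n => psi i)).
  by have := mulr_gt0 ph_gt0 phh_lt1; lra.
by case/pr_gt0_witness => psi /andP[notj i_psi]; exists psi; rewrite ?i_psi.
Qed.

Lemma cprob_eq_cond (A B B' : pred (prof n)) : B =1 B' -> cprob Q A B = cprob Q A B'.
Proof.
by move=> eqB; rewrite /cprob /pr; congr (_ / _); apply: eq_bigl => psi; rewrite /= eqB.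
Qed.

End Prior.

Lemma agree_imset n d (e : 'I_d -> 'I_n) (s : prof n) :
  agree [set e k | k : 'I_d] s =1 (fun psi => [forall k, psi (e k) == s (e k)]).
Proof.
move=> psi; apply/forall_inP/forallP => [agree_psi k | agree_psi _ /imsetP[k _ ->]].
  by apply: agree_psi; apply: imset_f.
exact: agree_psi.
Qed.

Section DeterministicStrategies.

Variables (R : realFieldType) (n : nat) (S : strat R n) (f : 'I_n -> bool -> bool).
Hypothesis S_det : forall k b, S k b = (f k b)%:R.

Lemma report_prob_det (psi r : prof n) :
  report_prob S psi r = (r == [ffun k => f k (psi k)])%:R.
Proof.
rewrite /report_prob; case: eqP => [->|r_neq].
  by apply: big1 => k _; rewrite ffunE S_det; case: (f k (psi k)); rewrite ?subr0.
have [k r_k] : exists k, r k != f k (psi k).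
  apply/existsP; rewrite -negb_forall; apply/negP => /forallP eq_r.
  by apply: r_neq; apply/ffunP => k; rewrite ffunE; apply/eqP.
rewrite (bigD1 k) //= S_det.
by move: r_k; case: (r k); case: (f k (psi k)) => //= _; rewrite ?subrr mul0r.
Qed.

Lemma expected_det_report (psi : prof n) (F : prof n -> R) :
  \sum_r report_prob S psi r * F r = F [ffun k => f k (psi k)].
Proof.
rewrite (bigD1 [ffun k => f k (psi k)]) //= report_prob_det eqxx mul1r.
by rewrite big1 ?addr0 // => r /negPf r_neq; rewrite report_prob_det r_neq mul0r.
Qed.

End DeterministicStrategies.

Definition override_on n (D : {set 'I_n}) (t : 'I_n -> bool) (psi : prof n) : prof n :=
  [ffun k => if k \in D then t k else psi k].

Definition peer_score (R : realFieldType) (PS : bool -> R -> R) (pj q : R) : R :=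
  pj * PS true q + (1 - pj) * PS false q.

Definition posterior (R : realFieldType) (phh phl : R) (b : bool) : R :=
  if b then phh else phl.

Section Payment.

Variables (R : realFieldType) (n : nat) (Q : prof n -> R) (PS : bool -> R -> R).
Variables (phh phl pj : R) (D : {set 'I_n}) (s : prof n).
Hypothesis peer_freq : forall j, j \notin D ->
  pr Q (predI (fun psi : prof n => psi j) (agree D s)) = pj * pr Q (agree D s).

Definition outsider_score (b : bool) : R :=
  #|~: D|%:R * peer_score PS pj (posterior phh phl b).

Lemma sum_mass_outsider_score (j : 'I_n) (q : R) : j \notin D ->
  \sum_(psi | agree D s psi) Q psi * PS (psi j) q = pr Q (agree D s) * peer_score PS pj q.
Proof.
move=> jD; rewrite (sum_mass_signal _ _ _ (fun b => PS b q)) peer_freq //.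
have := pr_predI_predC Q (fun psi : prof n => psi j) (agree D s).
rewrite peer_freq // /peer_score => split_s; rewrite [X in X * PS false q](_ : _ = (1 - pj) * pr Q (agree D s)).
  by ring.
by lra.
Qed.

Lemma expected_payment_override (t : 'I_n -> bool) (i : 'I_n) : i \in D ->
  \sum_(psi | agree D s psi) Q psi * payment PS phh phl i (override_on D t psi)
  = pr Q (agree D s) * ((n.-1)%:R^-1 * coalition_score PS (posterior phh phl) outsider_score D t i).
Proof.
move=> iD; set pD := pr Q (agree D s); set q := posterior phh phl (t i).
have payment_psi psi : payment PS phh phl i (override_on D t psi) =
    (n.-1)%:R^-1 * \sum_(j | j != i) PS (override_on D t psi j) q.
  by rewrite /payment ffunE iD.
under eq_bigr do rewrite payment_psi mulrCA mulr_sumr.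
rewrite -mulr_sumr exchange_big /= mulrCA; congr (_ * _).
rewrite /coalition_score mulrDr (bigID (fun j => j \in D)) /=; congr (_ + _).
  rewrite mulr_sumr; apply: eq_big => [j | j /andP[_ jD]]; first by rewrite andbC.
  by under eq_bigr do rewrite ffunE jD; rewrite -mulr_suml mulrC.
transitivity (\sum_(j in ~: D) pD * peer_score PS pj q).
  apply: eq_big => [j | j]; first by rewrite in_setC andb_idl // => jD; apply: contraNneq jD => ->.
  move=> /andP[_ jD]; under eq_bigr do rewrite ffunE (negPf jD).
  exact: sum_mass_outsider_score.
by rewrite sumr_const /outsider_score mulr_natl mulrnAr.
Qed.

Lemma util_override (S : strat R n) (f : 'I_n -> bool -> bool) (t : 'I_n -> bool) (i : 'I_n) :
  i \in D -> pr Q (agree D s) != 0 -> (forall k b, S k b = (f k b)%:R) ->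
  (forall psi, agree D s psi -> [ffun k => f k (psi k)] = override_on D t psi) ->
  util Q PS phh phl S i D s
  = (n.-1)%:R^-1 * coalition_score PS (posterior phh phl) outsider_score D t i.
Proof.
move=> iD pD_neq0 S_det f_t; rewrite /util.
under eq_bigr => psi agree_psi do rewrite (expected_det_report S_det) f_t //.
by rewrite expected_payment_override // mulrC mulKf.
Qed.

Lemma truthful_not_interim_eq (Dfam : {set {set 'I_n}}) (i0 i1 : 'I_n) :
  (forall b, PS (~~ b) (posterior phh phl b) < PS b (posterior phh phl b)) ->
  (1 < n)%N -> D \in Dfam -> 0 < pr Q (agree D s) ->
  i0 \in D -> i1 \in D -> s i0 -> ~~ s i1 ->
  ~ interim_eq Q PS phh phl Dfam (@truthful R n).
Proof.
move=> PS_agree n_gt1 D_adm pD_gt0 i0D i1D s_i0 s_i1.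
have [c gain_c] := unanimous_deviation_profitable outsider_score PS_agree i0D i1D s_i0 s_i1.
apply; exists D, s, (fun i b => (if i \in D then c else b)%:R); split => //.
- by move=> i b; rewrite ler0n lern1 leq_b1.
- by move=> i /negPf iD [|]; rewrite iD.
have pD_neq0 : pr Q (agree D s) != 0 by rewrite gt_eqF.
have truthful_det k b : @truthful R n k b = b%:R by case: b.
have truthful_report psi : agree D s psi -> [ffun k => psi k] = override_on D s psi.
  move=> /forall_inP agree_psi; apply/ffunP => k; rewrite !ffunE.
  by case: ifP => // /agree_psi /eqP.
move=> i iD; rewrite (util_override (f := fun _ b => b) iD pD_neq0
  truthful_det truthful_report).
rewrite (util_override (f := fun k b => if k \in D then c else b) iD pD_neq0
  (fun _ _ => erefl) (fun _ _ => erefl)).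
rewrite ltr_pM2l ?gain_c // invr_gt0 ltr0n.
by rewrite -subn1 subn_gt0.
Qed.

End Payment.

Theorem mainTheorem10 (R : realFieldType) (PS : bool -> R -> R) (d : nat)
  (ph phh phl : R) (p : {ffun 'I_d -> bool} -> R)
  (Q : forall n, prof n -> R) (Dfam : forall n, {set {set 'I_n}}) (N0 : nat) :
  strictly_proper PS ->
  PS false phh < PS true phh ->
  PS true phl < PS false phl ->
  (2 <= d)%N ->
  0 < ph -> 0 < 1 - ph -> phl < phh -> 0 < phl -> 0 < 1 - phh ->
  (forall n, (N0 <= n)%N -> is_sym_prior (Q n)) ->
  (forall n, (N0 <= n)%N -> forall i j : 'I_n, i != j ->
     [/\ pr (Q n) (fun psi => psi i) = ph,
         cprob (Q n) (fun psi => psi j) (fun psi => psi i) = phh &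
         cprob (Q n) (fun psi => psi j) (fun psi => ~~ psi i) = phl]) ->
  (forall n, (N0 <= n)%N -> exists e : 'I_d -> 'I_n,
     [/\ injective e,
         [set e k | k : 'I_d] \in Dfam n &
         forall s : {ffun 'I_d -> bool}, (exists k, s k) -> (exists k, ~~ s k) ->
           forall j : 'I_n, j \notin [set e k | k : 'I_d] ->
             cprob (Q n) (fun psi => psi j) (fun psi => [forall k, psi (e k) == s k])
               = p s]) ->
  exists N, forall n, (N <= n)%N -> ~ interim_eq (Q n) PS phh phl (Dfam n) (@truthful R n).
Proof.
move=> _ PS_hh PS_ll d_ge2 ph_gt0 _ _ _ phh_lt1 prior marginals coalition.
exists (maxn N0 d) => n; rewrite geq_max => /andP[N0n dn].
have [e [e_inj D_adm e_p]] := coalition n N0n; set D := [set e k | k : 'I_d] in D_adm e_p.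
have [Q_ge0 _ _] := prior n N0n.
have e_D k : e k \in D by apply: imset_f.
pose i0 : 'I_d := Ordinal (ltnW d_ge2); pose i1 : 'I_d := Ordinal d_ge2.
have e_i01 : e i0 != e i1 by rewrite (inj_eq e_inj).
have [pr_i0 cprob_i1 _] := marginals n N0n (e i0) (e i1) e_i01.
have [psi0 /andP[psi0_i0 psi0_i1] Q_psi0] :=
  exists_mixed_profile Q_ge0 pr_i0 cprob_i1 ph_gt0 phh_lt1.
have pD_gt0 : 0 < pr (Q n) (agree D psi0).
  by apply: lt_le_trans Q_psi0 (pr_ge_mass Q_ge0 _); apply/forall_inP.
pose sD : {ffun 'I_d -> bool} := [ffun k => psi0 (e k)].
have peer_freq j : j \notin D -> pr (Q n) (predI (fun psi : prof n => psi j) (agree D psi0))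
    = p sD * pr (Q n) (agree D psi0).
  move=> jD; apply: pr_predI_cprob; first by rewrite gt_eqF.
  rewrite -(e_p sD _ _ j jD); last 2 first.
  - by exists i0; rewrite ffunE.
  - by exists i1; rewrite ffunE.
  by apply: cprob_eq_cond => psi; rewrite agree_imset; apply: eq_forallb => k; rewrite ffunE.
have PS_agree b : PS (~~ b) (posterior phh phl b) < PS b (posterior phh phl b) by case: b.
apply: (truthful_not_interim_eq peer_freq PS_agree _ D_adm pD_gt0 (e_D i0) (e_D i1)) => //.
exact: leq_trans d_ge2 dn.
Qed.
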